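(* Let $\alpha>0$ and $g,h\in\mathbb{R}$ with $h>g$, and put $\gamma=h-g>0$ and $\lambda=1-g$. Assume the generic (nondegenerate) condition: there is no integer $k\geq 0$ with $k\gamma-g=-1$. Let $F_0\in(0,1)$ and $X_0\in\mathbb{R}$, and let $F$ be a differentiable function on an interval $I\ni X_0$ with values in $(0,1)$ satisfying $$\frac{dF}{dX}=\alpha\,(F^g-F^h),\qquad F(X_0)=F_0 .$$ Then for every $X\in I$, writing $F=F(X)$, $$X = X_0+\frac{F^{\lambda}}{\alpha\lambda}\left(1+\frac{\lambda F^{\gamma}}{\gamma}\,\Phi\!\left[F^{\gamma},1,1+\frac{\lambda}{\gamma}\right]\right)-\frac{F_0^{\lambda}}{\alpha\lambda}\left(1+\frac{\lambda F_0^{\gamma}}{\gamma}\,\Phi\!\left[F_0^{\gamma},1,1+\frac{\lambda}{\gamma}\right]\right),$$ where $\Phi$ is Lerch's transcendent. (Under the generic condition $\lambda\neq 0$ and $1+\lambda/\gamma\notin\{0,-1,-2,\dots\}$, so all terms are defined.)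
   Context: Lerch's transcendent is defined by $\Phi[z,s,v]=\sum_{n=0}^{\infty}\frac{z^n}{(v+n)^s}$ for $|z|<1$ and $v\notin\{0,-1,-2,\dots\}$. The differential equation defines the S-distribution: $F$ is the cumulative distribution function, $dF/dX$ the density, and the formula gives the quantile $X$ as a function of the cumulative value $F$. *)

From Stdlib Require Import Reals.
From Coquelicot Require Import Coquelicot.
Open Scope R_scope.

(* Coquelicot's [Series] is total; it is the true sum when the series
   converges (e.g. |z| < 1 and v not in {0,-1,-2,...}). *)
Definition Lerch (z : R) (s : nat) (v : R) : R :=
  Series (fun n : nat => z ^ n / (v + INR n) ^ s).

Definition Sdist_G (alpha g h u : R) : R :=
  let gam := h - g in
  let lam := 1 - g in
  Rpower u lam / (alpha * lam) *
  (1 + lam * Rpower u gam / gam * Lerch (Rpower u gam) 1 (1 + lam / gam)).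

From Stdlib Require Import Reals Lra.
From Coquelicot Require Import Coquelicot.
Open Scope R_scope.

(* Put lam = 1 - g, gam = h - g and K(z) = sum_m z^m / (lam + gam m); the Lerch
   series is the tail of K, so Sdist_G u = u^lam K(u^gam) / alpha on (0, 1).
   Multiplying the m-th coefficient of K by lam + gam m gives 1, hence
   lam K(z) + gam z K'(z) = 1 / (1 - z), and the chain rule yields
   (Sdist_G)'(u) = u^(-g) / (alpha (1 - u^gam)) = 1 / (alpha (u^g - u^h)).
   Along a solution F, Sdist_G (F X) - X thus has zero derivative, so it is
   constant on the interval. *)

Definition recip_arith (a b : R) (n : nat) : R := / (a + b * INR n).

Section RecipArith.

Variables a b : R.
Hypothesis b_neq0 : b <> 0.
Hypothesis arith_neq0 : forall n, a + b * INR n <> 0.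

Lemma CV_radius_recip_arith : CV_radius (recip_arith a b) = 1.
Proof.
  rewrite <- Rinv_1.
  apply CV_radius_finite_DAlembert;
    [intros n; apply Rinv_neq_0_compat, arith_neq0 | lra |].
  assert (Hlim : is_lim_seq (fun n => 1 - / (a / b + 1 + INR n)) (1 - 0)).
  { apply is_lim_seq_minus'; [apply is_lim_seq_const |].
    change (Finite 0) with (Rbar_inv p_infty).
    apply is_lim_seq_inv; [| discriminate].
    eapply is_lim_seq_plus; [apply is_lim_seq_const | apply is_lim_seq_INR | reflexivity]. }
  apply is_lim_seq_abs in Hlim.
  simpl in Hlim. rewrite Rminus_0_r, Rabs_R1 in Hlim.
  eapply is_lim_seq_ext; [| exact Hlim].
  intros n. apply (f_equal Rabs). unfold recip_arith. rewrite S_INR.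
  pose proof (arith_neq0 n) as Hn. pose proof (arith_neq0 (S n)) as HSn.
  rewrite S_INR in HSn.
  replace (a / b + 1 + INR n) with ((a + b * (INR n + 1)) / b) by (field; exact b_neq0).
  field. repeat split; assumption.
Qed.

Lemma PSeries_recip_arith_ode (z : R) : Rabs z < 1 ->
  a * PSeries (recip_arith a b) z + b * (z * PSeries (PS_derive (recip_arith a b)) z)
  = / (1 - z).
Proof.
  intros Hz.
  assert (Hr : Rbar_lt (Rabs z) (CV_radius (recip_arith a b)))
    by (rewrite CV_radius_recip_arith; exact Hz).
  rewrite <- PSeries_incr_1, <- !PSeries_scal, <- PSeries_plus.
  2: { apply ex_pseries_scal; [apply Rmult_comm | apply CV_radius_inside, Hr]. }
  2: { apply ex_pseries_scal; [apply Rmult_comm |].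
       apply ex_pseries_incr_1, ex_pseries_derive, Hr. }
  rewrite (PSeries_ext _ (fun _ => 1)).
  - apply is_series_unique.
    eapply is_series_ext; [| apply is_series_geom, Hz].
    intros n. simpl. ring.
  - intros [| n]; unfold PS_plus, PS_scal, PS_incr_1, PS_derive, recip_arith;
      change plus with Rplus; change scal with Rmult.
    + pose proof (arith_neq0 0) as H0.
      change (INR 0) with 0 in *. change (@zero R_AbelianMonoid) with 0.
      rewrite !Rmult_0_r, Rplus_0_r in *. field. exact H0.
    + pose proof (arith_neq0 (S n)) as Hn. field. exact Hn.
Qed.

End RecipArith.

Lemma Lerch_1_PSeries (z v : R) : Lerch z 1 v = PSeries (recip_arith v 1) z.
Proof.
  unfold Lerch, PSeries, recip_arith. apply Series_ext. intros n.
  rewrite pow_1, Rmult_1_l. apply Rmult_comm.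
Qed.

Lemma Lerch_1_shift (lam gam z : R) : lam <> 0 -> gam <> 0 ->
  ex_pseries (recip_arith lam gam) z ->
  1 + lam * z / gam * Lerch z 1 (1 + lam / gam) = lam * PSeries (recip_arith lam gam) z.
Proof.
  intros Hlam Hgam Hex.
  rewrite (PSeries_decr_1 _ _ Hex), Lerch_1_PSeries.
  rewrite (PSeries_ext (PS_decr_1 _) (PS_scal (/ gam) (recip_arith (1 + lam / gam) 1))),
    PSeries_scal.
  - replace (recip_arith lam gam 0) with (/ lam)
      by (unfold recip_arith; simpl; rewrite Rmult_0_r, Rplus_0_r; reflexivity).
    field. split; assumption.
  - intros n. unfold PS_decr_1, PS_scal, recip_arith. change scal with Rmult.
    rewrite S_INR, <- Rinv_mult. f_equal. field. exact Hgam.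
Qed.

Lemma Rpower_lt_base_lt1 (x y z : R) : 0 < x < 1 -> y < z -> Rpower x z < Rpower x y.
Proof.
  intros Hx Hyz. unfold Rpower. apply exp_increasing.
  assert (ln x < 0) by (rewrite <- ln_1; apply ln_increasing; lra).
  nra.
Qed.

Lemma Rabs_Rpower_lt1 (x y : R) : 0 < x < 1 -> 0 < y -> Rabs (Rpower x y) < 1.
Proof.
  intros Hx Hy. rewrite Rabs_pos_eq by (left; apply exp_pos).
  rewrite <- (Rpower_O x) by lra. apply Rpower_lt_base_lt1; assumption.
Qed.

Lemma is_derive_Rpower (x y : R) : 0 < x ->
  is_derive (fun t => Rpower t y) x (y * Rpower x (y - 1)).
Proof. intros Hx. apply is_derive_Reals, derivable_pt_lim_power, Hx. Qed.

Section SDistribution.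

Variables alpha g h : R.
Hypothesis alpha_pos : 0 < alpha.
Hypothesis g_lt_h : g < h.
Hypothesis nondegenerate : forall n, 1 - g + (h - g) * INR n <> 0.

Let K := PSeries (recip_arith (1 - g) (h - g)).

Lemma Sdist_G_PSeries (u : R) : 0 < u < 1 ->
  Sdist_G alpha g h u = Rpower u (1 - g) / alpha * K (Rpower u (h - g)).
Proof.
  intros Hu.
  assert (Hlam : 1 - g <> 0) by (generalize (nondegenerate 0); simpl; lra).
  unfold Sdist_G, K; cbv zeta. rewrite Lerch_1_shift; [| exact Hlam | lra |].
  - field. split; lra.
  - apply CV_radius_inside. rewrite CV_radius_recip_arith; [| lra | exact nondegenerate].
    apply Rabs_Rpower_lt1; lra.
Qed.

Lemma is_derive_Sdist_G (u : R) : 0 < u < 1 ->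
  is_derive (Sdist_G alpha g h) u (/ (alpha * (Rpower u g - Rpower u h))).
Proof.
  intros Hu.
  set (c := recip_arith (1 - g) (h - g)).
  set (z := Rpower u (h - g)).
  set (D := PSeries (PS_derive c) z).
  assert (Hz : Rabs z < 1) by (apply Rabs_Rpower_lt1; lra).
  assert (HK : is_derive K z D).
  { apply is_derive_PSeries.
    rewrite CV_radius_recip_arith; [exact Hz | lra | exact nondegenerate]. }
  assert (Hode : (1 - g) * K z + (h - g) * (z * D) = / (1 - z)).
  { apply PSeries_recip_arith_ode; [lra | exact nondegenerate | exact Hz]. }
  apply is_derive_ext_loc with (f := fun t => Rpower t (1 - g) / alpha * K (Rpower t (h - g))).
  { apply (locally_interval _ u 0 1); [simpl; lra | simpl; lra |].
    intros t H0 H1. symmetry. apply Sdist_G_PSeries. simpl in *. lra. }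
  assert (Hd : is_derive (fun t => Rpower t (1 - g) / alpha * K (Rpower t (h - g))) u
    ((1 - g) * Rpower u (1 - g - 1) / alpha * K z
     + Rpower u (1 - g) / alpha * ((h - g) * Rpower u (h - g - 1) * D))).
  { assert (Hu0 : 0 < u) by lra.
    exact (is_derive_mult _ _ u _ _
      (is_derive_scal_l _ u _ (/ alpha) (is_derive_Rpower u (1 - g) Hu0))
      (is_derive_comp K (fun t => Rpower t (h - g)) u _ _ HK (is_derive_Rpower u (h - g) Hu0))
      Rmult_comm). }
  set (E := Rpower u g).
  assert (HE : 0 < E) by apply exp_pos.
  assert (Hlam1 : Rpower u (1 - g - 1) = / E).
  { replace (1 - g - 1) with (- g) by ring. apply Rpower_Ropp. }
  assert (Hlam : Rpower u (1 - g) = u * / E).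
  { replace (1 - g) with (1 + - g) by ring.
    rewrite Rpower_plus, Rpower_1, Rpower_Ropp by lra. reflexivity. }
  assert (Hgam1 : Rpower u (h - g - 1) = z * / u).
  { replace (h - g - 1) with ((h - g) + - (1)) by ring.
    rewrite Rpower_plus, Rpower_Ropp, Rpower_1 by lra. reflexivity. }
  assert (Hh : Rpower u h = E * z).
  { unfold E, z. rewrite <- Rpower_plus. f_equal. ring. }
  rewrite Hlam1, Hlam, Hgam1 in Hd. rewrite Hh.
  assert (Hz1 : z < 1) by (apply Rabs_def2 in Hz; lra).
  replace (/ (alpha * (E - E * z))) with
    (/ (E * alpha) * ((1 - g) * K z + (h - g) * (z * D))).
  - replace (/ (E * alpha) * ((1 - g) * K z + (h - g) * (z * D))) with
      ((1 - g) * / E / alpha * K z + u * / E / alpha * ((h - g) * (z * / u) * D))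
      by (field; lra).
    exact Hd.
  - rewrite Hode. replace (E - E * z) with (E * (1 - z)) by ring.
    field. repeat split; lra.
Qed.

Lemma is_derive_Sdist_G_comp_sub (F : R -> R) (x : R) : 0 < F x < 1 ->
  is_derive F x (alpha * (Rpower (F x) g - Rpower (F x) h)) ->
  is_derive (fun t => Sdist_G alpha g h (F t) - t) x 0.
Proof.
  intros HFx HDx.
  assert (Hpow : Rpower (F x) h < Rpower (F x) g)
    by (apply Rpower_lt_base_lt1; assumption).
  set (r := alpha * (Rpower (F x) g - Rpower (F x) h)) in *.
  assert (Hr : 0 < r) by (apply Rmult_lt_0_compat; lra).
  replace 0 with (r * / r - 1) by (field; lra).
  apply (is_derive_minus (fun t => Sdist_G alpha g h (F t)) (fun t => t)).
  - exact (is_derive_comp _ F x _ _ (is_derive_Sdist_G _ HFx) HDx).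
  - exact (@is_derive_id R_AbsRing x).
Qed.

End SDistribution.

Lemma eq_is_derive_Rbar_interval (f : R -> R) (a b : Rbar) :
  (forall t : R, Rbar_lt a t -> Rbar_lt t b -> is_derive f t 0) ->
  forall x y : R, Rbar_lt a x -> Rbar_lt x b -> Rbar_lt a y -> Rbar_lt y b -> f x = f y.
Proof.
  intros Hf.
  assert (Hlt : forall x y, x < y -> Rbar_lt a x -> Rbar_lt y b -> f x = f y).
  { intros x y Hxy Hax Hyb. apply eq_is_derive; [| exact Hxy].
    intros t Ht. apply Hf.
    - apply (Rbar_lt_le_trans _ x); [exact Hax | apply Ht].
    - apply (Rbar_le_lt_trans _ y); [apply Ht | exact Hyb]. }
  intros x y Hax Hxb Hay Hyb.
  destruct (total_order_T x y) as [[Hxy | ->] | Hyx].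
  - apply Hlt; assumption.
  - reflexivity.
  - symmetry. apply Hlt; assumption.
Qed.

Theorem mainTheorem1
  (alpha g h : R) (F0 X0 : R) (a b : Rbar) (F : R -> R) :
  0 < alpha ->
  g < h ->
  (~ exists k : nat, INR k * (h - g) - g = -1) ->
  0 < F0 < 1 ->
  Rbar_lt a X0 -> Rbar_lt X0 b ->
  (forall x : R, Rbar_lt a x -> Rbar_lt x b -> 0 < F x < 1) ->
  (forall x : R, Rbar_lt a x -> Rbar_lt x b ->
     is_derive F x (alpha * (Rpower (F x) g - Rpower (F x) h))) ->
  F X0 = F0 ->
  forall X : R, Rbar_lt a X -> Rbar_lt X b ->
    X = X0 + Sdist_G alpha g h (F X) - Sdist_G alpha g h F0.
Proof.
  intros Halpha Hgh Hgeneric _ HaX0 HX0b HF HD HX0 X HaX HXb.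
  assert (Hnondeg : forall n, 1 - g + (h - g) * INR n <> 0).
  { intros n E. apply Hgeneric. exists n. lra. }
  assert (Hconst : Sdist_G alpha g h (F X) - X = Sdist_G alpha g h (F X0) - X0).
  { apply (eq_is_derive_Rbar_interval (fun t => Sdist_G alpha g h (F t) - t) a b);
      try assumption.
    intros t Hat Htb. apply is_derive_Sdist_G_comp_sub; auto. }
  rewrite HX0 in Hconst. lra.
Qed.
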